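(* Let $\mathcal{C}$ be a rigid monoidal category. An object $f:A\to B$ of $\mathrm{Arr}(\mathcal{C})$ (with its pointwise monoidal structure) has a dual if and only if $f$ is an isomorphism in $\mathcal{C}$.
   Context: $\mathrm{Arr}(\mathcal{C})$ is the arrow category: objects are morphisms $h:A\to B$ of $\mathcal{C}$, morphisms $(A,B,h)\to(A',B',h')$ are pairs $(\phi_A,\phi_B)$ with $h'\circ\phi_A=\phi_B\circ h$, composition componentwise. Pointwise monoidal structure: $(f:A_1\to B_1)\otimes(g:A_2\to B_2)=f\otimes g:A_1\otimes A_2\to B_1\otimes B_2$, morphisms tensored componentwise, unit object $\mathrm{id}_{\mathbb{I}}$, associator and unitors componentwise from $\mathcal{C}$. Rigid means every object has (left and right) duals, with evaluation and coevaluation maps satisfying the snake identities. *)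

Set Implicit Arguments.
Unset Strict Implicit.

Record MonData := MkMonData {
  ob : Type;
  hom : ob -> ob -> Type;
  idm : forall A, hom A A;
  comp : forall A B C, hom B C -> hom A B -> hom A C;
  tens : ob -> ob -> ob;
  tensm : forall A B C D, hom A B -> hom C D -> hom (tens A C) (tens B D);
  unit : ob;
  assoc : forall A B C, hom (tens (tens A B) C) (tens A (tens B C));
  assoc_inv : forall A B C, hom (tens A (tens B C)) (tens (tens A B) C);
  lunit : forall A, hom (tens unit A) A;
  lunit_inv : forall A, hom A (tens unit A);
  runit : forall A, hom (tens A unit) A;
  runit_inv : forall A, hom A (tens A unit) }.

Arguments idm {m} A.
Arguments comp {m A B C} _ _.
Arguments tens {m} _ _.
Arguments tensm {m A B C D} _ _.
Arguments unit {m}.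
Arguments assoc {m} A B C.
Arguments assoc_inv {m} A B C.
Arguments lunit {m} A.
Arguments lunit_inv {m} A.
Arguments runit {m} A.
Arguments runit_inv {m} A.

Record IsMonoidal (M : MonData) : Prop := {
  comp_assoc : forall (A B C D : ob M) (f : hom A B) (g : hom B C) (h : hom C D),
      comp h (comp g f) = comp (comp h g) f;
  comp_id_l : forall (A B : ob M) (f : hom A B), comp (idm B) f = f;
  comp_id_r : forall (A B : ob M) (f : hom A B), comp f (idm A) = f;
  tensm_id : forall (A B : ob M), tensm (idm A) (idm B) = idm (tens A B);
  tensm_comp : forall (A1 B1 C1 A2 B2 C2 : ob M)
      (f1 : hom A1 B1) (g1 : hom B1 C1) (f2 : hom A2 B2) (g2 : hom B2 C2),
      tensm (comp g1 f1) (comp g2 f2) = comp (tensm g1 g2) (tensm f1 f2);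
  assoc_iso1 : forall A B C : ob M, comp (assoc_inv A B C) (assoc A B C) = idm _;
  assoc_iso2 : forall A B C : ob M, comp (assoc A B C) (assoc_inv A B C) = idm _;
  lunit_iso1 : forall A : ob M, comp (lunit_inv A) (lunit A) = idm _;
  lunit_iso2 : forall A : ob M, comp (lunit A) (lunit_inv A) = idm _;
  runit_iso1 : forall A : ob M, comp (runit_inv A) (runit A) = idm _;
  runit_iso2 : forall A : ob M, comp (runit A) (runit_inv A) = idm _;
  assoc_nat : forall (A A' B B' C C' : ob M) (f : hom A A') (g : hom B B') (h : hom C C'),
      comp (assoc A' B' C') (tensm (tensm f g) h) = comp (tensm f (tensm g h)) (assoc A B C);
  lunit_nat : forall (A B : ob M) (f : hom A B),
      comp (lunit B) (tensm (idm unit) f) = comp f (lunit A);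
  runit_nat : forall (A B : ob M) (f : hom A B),
      comp (runit B) (tensm f (idm unit)) = comp f (runit A);
  pentagon : forall A B C D : ob M,
      comp (assoc A B (tens C D)) (assoc (tens A B) C D)
      = comp (tensm (idm A) (assoc B C D))
             (comp (assoc A (tens B C) D) (tensm (assoc A B C) (idm D)));
  triangle : forall A B : ob M,
      comp (tensm (idm A) (lunit B)) (assoc A unit B) = tensm (runit A) (idm B) }.

Record MonCat := MkMonCat { mdata :> MonData; mon_ax : IsMonoidal mdata }.

Definition is_iso (M : MonData) (A B : ob M) (f : hom A B) : Prop :=
  exists g : hom B A, comp g f = idm A /\ comp f g = idm B.

Definition is_left_dual (M : MonData) (X Xs : ob M)
    (ev : hom (tens Xs X) unit) (coev : hom unit (tens X Xs)) : Prop :=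
  comp (runit X) (comp (tensm (idm X) ev)
       (comp (assoc X Xs X) (comp (tensm coev (idm X)) (lunit_inv X)))) = idm X
  /\
  comp (lunit Xs) (comp (tensm ev (idm Xs))
       (comp (assoc_inv Xs X Xs) (comp (tensm (idm Xs) coev) (runit_inv Xs)))) = idm Xs.

Definition has_left_dual (M : MonData) (X : ob M) : Prop :=
  exists (Xs : ob M) (ev : hom (tens Xs X) unit) (coev : hom unit (tens X Xs)),
    is_left_dual ev coev.

(* X has a right dual Xs iff X is a left dual of Xs. *)
Definition has_right_dual (M : MonData) (X : ob M) : Prop :=
  exists (Xs : ob M) (ev : hom (tens X Xs) unit) (coev : hom unit (tens Xs X)),
    is_left_dual ev coev.

Definition rigid (M : MonData) : Prop :=
  forall X : ob M, has_left_dual X /\ has_right_dual X.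

Record ArrOb (M : MonData) := MkArrOb { asrc : ob M; atgt : ob M; amor : hom asrc atgt }.
Arguments MkArrOb {M asrc atgt} amor.

Definition ArrHom (M : MonData) (X Y : ArrOb M) : Type :=
  { p : hom (asrc X) (asrc Y) * hom (atgt X) (atgt Y)
  | comp (amor Y) (fst p) = comp (snd p) (amor X) }.

Section Arr.
Variable C : MonCat.
Let H := mon_ax C.

Lemma inv_nat (A A' B B' : ob C) (a : hom A B) (ai : hom B A) (b : hom A' B') (bi : hom B' A')
  (x : hom A A') (y : hom B B') :
  comp a ai = idm B -> comp bi b = idm A' -> comp b x = comp y a ->
  comp x ai = comp bi y.
Proof.
  intros E1 E2 E3.
  transitivity (comp (comp bi b) (comp x ai)).
  { rewrite E2, (comp_id_l H); reflexivity. }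
  rewrite <- (comp_assoc H), (comp_assoc H ai x b), E3.
  rewrite <- (comp_assoc H ai a y), E1, (comp_id_r H). reflexivity.
Qed.

Definition arr_id (X : ArrOb C) : ArrHom X X.
Proof.
  exists (idm (asrc X), idm (atgt X)); simpl.
  rewrite (comp_id_l H), (comp_id_r H); reflexivity.
Defined.

Definition arr_comp (X Y Z : ArrOb C) (g : ArrHom Y Z) (f : ArrHom X Y) : ArrHom X Z.
Proof.
  exists (comp (fst (proj1_sig g)) (fst (proj1_sig f)),
          comp (snd (proj1_sig g)) (snd (proj1_sig f))).
  destruct g as [[g1 g2] Hg], f as [[f1 f2] Hf]; simpl in *.
  rewrite (comp_assoc H), Hg, <- (comp_assoc H), Hf, (comp_assoc H); reflexivity.
Defined.

Definition arr_tens (X Y : ArrOb C) : ArrOb C := MkArrOb (tensm (amor X) (amor Y)).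

Definition arr_tensm (X X' Y Y' : ArrOb C) (p : ArrHom X X') (q : ArrHom Y Y')
  : ArrHom (arr_tens X Y) (arr_tens X' Y').
Proof.
  exists (tensm (fst (proj1_sig p)) (fst (proj1_sig q)),
          tensm (snd (proj1_sig p)) (snd (proj1_sig q))).
  destruct p as [[p1 p2] Hp], q as [[q1 q2] Hq]; simpl in *.
  rewrite <- !(tensm_comp H), Hp, Hq; reflexivity.
Defined.

Definition arr_unit : ArrOb C := MkArrOb (idm (@unit C)).

Definition arr_assoc (X Y Z : ArrOb C)
  : ArrHom (arr_tens (arr_tens X Y) Z) (arr_tens X (arr_tens Y Z)).
Proof.
  exists (assoc (asrc X) (asrc Y) (asrc Z), assoc (atgt X) (atgt Y) (atgt Z)); simpl.
  symmetry; apply (assoc_nat H).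
Defined.

Definition arr_assoc_inv (X Y Z : ArrOb C)
  : ArrHom (arr_tens X (arr_tens Y Z)) (arr_tens (arr_tens X Y) Z).
Proof.
  exists (assoc_inv (asrc X) (asrc Y) (asrc Z), assoc_inv (atgt X) (atgt Y) (atgt Z)); simpl.
  apply inv_nat with (a := assoc _ _ _) (b := assoc _ _ _).
  - apply (assoc_iso2 H).
  - apply (assoc_iso1 H).
  - apply (assoc_nat H).
Defined.

Definition arr_lunit (X : ArrOb C) : ArrHom (arr_tens arr_unit X) X.
Proof.
  exists (lunit (asrc X), lunit (atgt X)); simpl.
  symmetry; apply (lunit_nat H).
Defined.

Definition arr_lunit_inv (X : ArrOb C) : ArrHom X (arr_tens arr_unit X).
Proof.
  exists (lunit_inv (asrc X), lunit_inv (atgt X)); simpl.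
  apply inv_nat with (a := lunit _) (b := lunit _).
  - apply (lunit_iso2 H).
  - apply (lunit_iso1 H).
  - apply (lunit_nat H).
Defined.

Definition arr_runit (X : ArrOb C) : ArrHom (arr_tens X arr_unit) X.
Proof.
  exists (runit (asrc X), runit (atgt X)); simpl.
  symmetry; apply (runit_nat H).
Defined.

Definition arr_runit_inv (X : ArrOb C) : ArrHom X (arr_tens X arr_unit).
Proof.
  exists (runit_inv (asrc X), runit_inv (atgt X)); simpl.
  apply inv_nat with (a := runit _) (b := runit _).
  - apply (runit_iso2 H).
  - apply (runit_iso1 H).
  - apply (runit_nat H).
Defined.

Definition Arr : MonData :=
  @MkMonData (ArrOb C) (@ArrHom C) arr_id arr_comp arr_tens arr_tensm arr_unit
    arr_assoc arr_assoc_inv arr_lunit arr_lunit_inv arr_runit arr_runit_inv.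

End Arr.

(* Since composition, tensor
   product and the coherence maps of Arr(C) act componentwise, a left dual of
   f is an arrow g : S -> T together with left dualities (S, e1, c1) for A and
   (T, e2, c2) for B which are compatible with f and g (arr_is_left_dual).

   Such compatible dualities force f to be invertible: the "mate"
   runit ∘ (1 ⊗ e2 (g ⊗ 1)) ∘ assoc ∘ (c1 ⊗ 1) ∘ lunit⁻¹ : B -> A composes
   with f (on either side) to the zigzags of A and of B, which are identities
   (iso_of_compatible_left_duals).
   Conversely, if f is invertible and A has a left dual A*, then id_{A*} is a
   left dual of f: B is a left dual of A* via the dual structure of A
   transported along f (left_dual_transport).

   Right duals are left duals in the reversed monoidal category rev C
   (X ⊗' Y = Y ⊗ X), whose arrow category reverses that of C as well; hence
   the right-dual half of the theorem is the left-dual half applied to rev C. *)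

From Stdlib Require Import Setoid ProofIrrelevance.
Set Implicit Arguments.
Unset Strict Implicit.

Definition rev (M : MonData) : MonData :=
  @MkMonData (ob M) (@hom M) (@idm M) (@comp M)
    (fun X Y => tens Y X) (fun _ _ _ _ f g => tensm g f) unit
    (fun X Y Z => assoc_inv Z Y X) (fun X Y Z => assoc Z Y X)
    (fun X => runit X) (fun X => runit_inv X)
    (fun X => lunit X) (fun X => lunit_inv X).

Section MonoidalCalculus.
Variable C : MonCat.
Let HC := mon_ax C.
Local Notation "g ∘ f" := (comp (m := mdata C) g f) (at level 40, left associativity).
Local Notation "f ⊗ g" := (tensm (m := mdata C) f g) (at level 35).

Lemma compA (X Y Z W : ob C) (f : hom X Y) (g : hom Y Z) (h : hom Z W) :
  h ∘ (g ∘ f) = (h ∘ g) ∘ f.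
Proof. exact (comp_assoc HC f g h). Qed.

Lemma id_l (X Y : ob C) (f : hom X Y) : idm Y ∘ f = f.
Proof. exact (comp_id_l HC f). Qed.

Lemma id_r (X Y : ob C) (f : hom X Y) : f ∘ idm X = f.
Proof. exact (comp_id_r HC f). Qed.

Lemma tens_id (X Y : ob C) : idm X ⊗ idm Y = idm (tens X Y).
Proof. exact (tensm_id HC X Y). Qed.

Lemma tens_comp (X1 Y1 Z1 X2 Y2 Z2 : ob C) (f1 : hom X1 Y1) (g1 : hom Y1 Z1)
    (f2 : hom X2 Y2) (g2 : hom Y2 Z2) :
  (g1 ⊗ g2) ∘ (f1 ⊗ f2) = (g1 ∘ f1) ⊗ (g2 ∘ f2).
Proof. symmetry; exact (tensm_comp HC f1 g1 f2 g2). Qed.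

Lemma lunit_inv_nat (X Y : ob C) (f : hom X Y) :
  lunit_inv Y ∘ f = (idm unit ⊗ f) ∘ lunit_inv X.
Proof.
  symmetry; apply (inv_nat (C := C)) with (a := lunit _) (b := lunit _).
  - exact (lunit_iso2 HC X).
  - exact (lunit_iso1 HC Y).
  - exact (lunit_nat HC f).
Qed.

Lemma runit_inv_nat (X Y : ob C) (f : hom X Y) :
  runit_inv Y ∘ f = (f ⊗ idm unit) ∘ runit_inv X.
Proof.
  symmetry; apply (inv_nat (C := C)) with (a := runit _) (b := runit _).
  - exact (runit_iso2 HC X).
  - exact (runit_iso1 HC Y).
  - exact (runit_nat HC f).
Qed.

Lemma assoc_inv_nat (X X' Y Y' Z Z' : ob C) (f : hom X X') (g : hom Y Y') (h : hom Z Z') :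
  assoc_inv X' Y' Z' ∘ (f ⊗ (g ⊗ h)) = ((f ⊗ g) ⊗ h) ∘ assoc_inv X Y Z.
Proof.
  symmetry; apply (inv_nat (C := C)) with (a := assoc _ _ _) (b := assoc _ _ _).
  - exact (assoc_iso2 HC X Y Z).
  - exact (assoc_iso1 HC X' Y' Z').
  - exact (assoc_nat HC f g h).
Qed.

Lemma inverse_unique (X Y : ob C) (u : hom Y X) (v : hom X Y) (w : hom Y X) :
  u ∘ v = idm X -> v ∘ w = idm Y -> u = w.
Proof.
  intros Euv Evw.
  rewrite <- (id_r u), <- Evw, compA, Euv; apply id_l.
Qed.

(* An equation between composites still holds after precomposition, stated for
   right-nested composites so that it can rewrite inside a longer chain. *)
Lemma comp_prefix (X Y Z W : ob C) (x : hom Y Z) (y : hom X Y) (u : hom W Z) (v : hom X W) :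
  x ∘ y = u ∘ v -> forall (R : ob C) (r : hom R X), x ∘ (y ∘ r) = u ∘ (v ∘ r).
Proof. intros E R r; rewrite !compA, E; reflexivity. Qed.

Lemma comp_prefix1 (X Y Z : ob C) (x : hom Y Z) (y : hom X Y) (u : hom X Z) :
  x ∘ y = u -> forall (R : ob C) (r : hom R X), x ∘ (y ∘ r) = u ∘ r.
Proof. intros E R r; rewrite compA, E; reflexivity. Qed.

Arguments comp_prefix {X Y Z W x y u v} _ {R} r.
Arguments comp_prefix1 {X Y Z x y u} _ {R} r.

Ltac chase E :=
  first [ rewrite (comp_prefix E) | rewrite (comp_prefix1 E) | rewrite E ];
  rewrite <- ?compA.
Ltac chase_back E :=
  first [ rewrite <- (comp_prefix E) | rewrite <- (comp_prefix1 E) | rewrite <- E ];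
  rewrite <- ?compA.

(* The reversed structure is again monoidal; the pentagon and the triangle for
   rev C are the inverses of those of C. *)
Lemma rev_monoidal : IsMonoidal (rev C).
Proof.
  constructor; cbn.
  - exact (comp_assoc HC).
  - exact (comp_id_l HC).
  - exact (comp_id_r HC).
  - intros X Y; exact (tensm_id HC Y X).
  - intros; exact (tensm_comp HC f2 g2 f1 g1).
  - intros X Y Z; exact (assoc_iso2 HC Z Y X).
  - intros X Y Z; exact (assoc_iso1 HC Z Y X).
  - exact (runit_iso1 HC).
  - exact (runit_iso2 HC).
  - exact (lunit_iso1 HC).
  - exact (lunit_iso2 HC).
  - intros; apply assoc_inv_nat.
  - exact (runit_nat HC).
  - exact (lunit_nat HC).
  - (* The reversed pentagon is the inverse of the pentagon for (D, X, B, A):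
       its left side is a left inverse of that pentagon's left side, and its
       right side is a right inverse of that pentagon's right side. *)
    intros A B X D.
    apply inverse_unique with
      (v := assoc D X (tens B A) ∘ assoc (tens D X) B A).
    + rewrite <- ?compA. chase (assoc_iso1 HC D X (tens B A)).
      rewrite id_l; exact (assoc_iso1 HC (tens D X) B A).
    + rewrite (pentagon HC D X B A); rewrite <- ?compA.
      assert (Eouter : (assoc D X B ⊗ idm A) ∘ (assoc_inv D X B ⊗ idm A) = idm _).
      { rewrite tens_comp, (assoc_iso2 HC), id_l; apply tens_id. }
      assert (Einner : (idm D ⊗ assoc X B A) ∘ (idm D ⊗ assoc_inv X B A) = idm _).
      { rewrite tens_comp, (assoc_iso2 HC), id_l; apply tens_id. }
      chase Eouter; rewrite id_l.
      chase (assoc_iso2 HC D (tens X B) A); rewrite id_l.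
      exact Einner.
  - intros A B.
    rewrite <- (triangle HC B A), <- compA, (assoc_iso2 HC); apply id_r.
Qed.

Definition zigzag (X Xs : ob C) (ev : hom (tens Xs X) unit) (coev : hom unit (tens X Xs))
  : hom X X :=
  runit X ∘ ((idm X ⊗ ev) ∘ (assoc X Xs X ∘ ((coev ⊗ idm X) ∘ lunit_inv X))).

Definition zigzag_dual (X Xs : ob C) (ev : hom (tens Xs X) unit) (coev : hom unit (tens X Xs))
  : hom Xs Xs :=
  lunit Xs ∘ ((ev ⊗ idm Xs) ∘ (assoc_inv Xs X Xs ∘ ((idm Xs ⊗ coev) ∘ runit_inv Xs))).

Lemma is_left_dual_zigzag (X Xs : ob C) (ev : hom (tens Xs X) unit)
    (coev : hom unit (tens X Xs)) :
  is_left_dual ev coev <-> zigzag ev coev = idm X /\ zigzag_dual ev coev = idm Xs.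
Proof. exact (iff_refl _). Qed.

Section Transport.
Variables (X Xs Y : ob C) (ev : hom (tens Xs X) unit) (coev : hom unit (tens X Xs)).
Variables (h : hom Y X) (hi : hom X Y).
Hypothesis hhi : h ∘ hi = idm X.

Lemma zigzag_transport :
  zigzag (ev ∘ (idm Xs ⊗ h)) ((hi ⊗ idm Xs) ∘ coev) = hi ∘ (zigzag ev coev ∘ h).
Proof.
  unfold zigzag; rewrite <- ?compA.
  assert (Ecoev : ((hi ⊗ idm Xs) ∘ coev) ⊗ idm Y = ((hi ⊗ idm Xs) ⊗ idm Y) ∘ (coev ⊗ idm Y)).
  { rewrite tens_comp, id_l; reflexivity. }
  rewrite Ecoev; rewrite <- ?compA.
  chase (assoc_nat HC hi (idm Xs) (idm Y)).
  assert (Eev : (idm Y ⊗ (ev ∘ (idm Xs ⊗ h))) ∘ (hi ⊗ (idm Xs ⊗ idm Y))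
                = hi ⊗ (ev ∘ (idm Xs ⊗ h))).
  { rewrite tens_comp, tens_id, id_l, id_r; reflexivity. }
  chase Eev.
  chase (lunit_inv_nat h). chase_back (runit_nat HC hi).
  assert (Ehi : (hi ⊗ idm unit) ∘ (idm X ⊗ ev) = hi ⊗ ev).
  { rewrite tens_comp, id_l, id_r; reflexivity. }
  assert (Eh : (coev ⊗ idm X) ∘ (idm unit ⊗ h) = ((idm X ⊗ idm Xs) ⊗ h) ∘ (coev ⊗ idm Y)).
  { rewrite !tens_comp, tens_id, !id_l, !id_r; reflexivity. }
  chase Ehi. chase Eh. chase (assoc_nat HC (idm X) (idm Xs) h).
  assert (Ehev : (hi ⊗ ev) ∘ (idm X ⊗ (idm Xs ⊗ h)) = hi ⊗ (ev ∘ (idm Xs ⊗ h))).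
  { rewrite tens_comp, id_r; reflexivity. }
  chase Ehev. reflexivity.
Qed.

Lemma zigzag_dual_transport :
  zigzag_dual (ev ∘ (idm Xs ⊗ h)) ((hi ⊗ idm Xs) ∘ coev) = zigzag_dual ev coev.
Proof.
  unfold zigzag_dual.
  assert (E1 : (ev ∘ (idm Xs ⊗ h)) ⊗ idm Xs = (ev ⊗ idm Xs) ∘ ((idm Xs ⊗ h) ⊗ idm Xs)).
  { rewrite tens_comp, id_l; reflexivity. }
  rewrite E1; rewrite <- ?compA.
  chase_back (assoc_inv_nat (idm Xs) h (idm Xs)).
  assert (E2 : (idm Xs ⊗ (h ⊗ idm Xs)) ∘ (idm Xs ⊗ ((hi ⊗ idm Xs) ∘ coev)) = idm Xs ⊗ coev).
  { rewrite tens_comp, id_l, compA, tens_comp, hhi, id_l, tens_id, id_l; reflexivity. }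
  chase E2. reflexivity.
Qed.

Lemma left_dual_transport :
  hi ∘ h = idm Y ->
  is_left_dual ev coev -> is_left_dual (ev ∘ (idm Xs ⊗ h)) ((hi ⊗ idm Xs) ∘ coev).
Proof.
  intros hih; rewrite !is_left_dual_zigzag; intros [s1 s2].
  rewrite zigzag_transport, zigzag_dual_transport, s1, s2, id_l.
  split; [exact hih | reflexivity].
Qed.
End Transport.

Section Mate.
Variables (A B S T : ob C) (f : hom A B) (g : hom S T).
Variables (e1 : hom (tens S A) unit) (c1 : hom unit (tens A S)).
Variables (e2 : hom (tens T B) unit) (c2 : hom unit (tens B T)).

Definition mate : hom B A :=
  runit A ∘ ((idm A ⊗ (e2 ∘ (g ⊗ idm B))) ∘ (assoc A S B ∘ ((c1 ⊗ idm B) ∘ lunit_inv B))).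

Lemma mate_comp_l : e1 = e2 ∘ (g ⊗ f) -> mate ∘ f = zigzag e1 c1.
Proof.
  intros He; unfold mate, zigzag; rewrite <- ?compA.
  chase (lunit_inv_nat f).
  assert (E1 : (c1 ⊗ idm B) ∘ (idm unit ⊗ f) = ((idm A ⊗ idm S) ⊗ f) ∘ (c1 ⊗ idm A)).
  { rewrite !tens_comp, tens_id, !id_l, !id_r; reflexivity. }
  chase E1. chase (assoc_nat HC (idm A) (idm S) f).
  assert (E2 : (idm A ⊗ (e2 ∘ (g ⊗ idm B))) ∘ (idm A ⊗ (idm S ⊗ f)) = idm A ⊗ e1).
  { rewrite tens_comp, id_l, <- compA, tens_comp, id_l, id_r, He; reflexivity. }
  chase E2. reflexivity.
Qed.

Lemma mate_comp_r : (f ⊗ g) ∘ c1 = c2 -> f ∘ mate = zigzag e2 c2.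
Proof.
  intros Hc; unfold mate, zigzag; rewrite <- ?compA.
  chase_back (runit_nat HC f).
  assert (E1 : (f ⊗ idm unit) ∘ (idm A ⊗ (e2 ∘ (g ⊗ idm B)))
               = (idm B ⊗ e2) ∘ (f ⊗ (g ⊗ idm B))).
  { rewrite !tens_comp, !id_l, !id_r; reflexivity. }
  chase E1. chase_back (assoc_nat HC f g (idm B)).
  assert (E2 : ((f ⊗ g) ⊗ idm B) ∘ (c1 ⊗ idm B) = c2 ⊗ idm B).
  { rewrite tens_comp, Hc, id_l; reflexivity. }
  chase E2. reflexivity.
Qed.

Lemma iso_of_compatible_left_duals :
  is_left_dual e1 c1 -> is_left_dual e2 c2 ->
  e1 = e2 ∘ (g ⊗ f) -> (f ⊗ g) ∘ c1 = c2 -> is_iso f.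
Proof.
  rewrite !is_left_dual_zigzag; intros [s1 _] [s2 _] He Hc.
  exists mate; rewrite mate_comp_l, mate_comp_r by assumption; split; assumption.
Qed.
End Mate.

End MonoidalCalculus.

Definition revC (C : MonCat) : MonCat := MkMonCat (rev_monoidal C).

Lemma is_left_dual_rev (M : MonData) (X Xs : ob M) (ev : hom (tens X Xs) unit)
    (coev : hom unit (tens Xs X)) :
  is_left_dual (M := M) ev coev <-> is_left_dual (M := rev M) (X := X) (Xs := Xs) ev coev.
Proof. split; intros [s1 s2]; split; assumption. Qed.

Lemma has_right_dual_rev (M : MonData) (X : ob M) :
  has_right_dual X <-> has_left_dual (M := rev M) X.
Proof.
  split; intros [Xs [ev [coev D]]]; exists Xs, ev, coev; apply is_left_dual_rev; exact D.
Qed.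

Section ArrowCategory.
Variable C : MonCat.
Local Notation "g ∘ f" := (comp (m := mdata C) g f) (at level 40, left associativity).
Local Notation "f ⊗ g" := (tensm (m := mdata C) f g) (at level 35).

Lemma arr_hom_eq (X Y : ArrOb C) (p q : ArrHom X Y) : proj1_sig p = proj1_sig q -> p = q.
Proof.
  destruct p as [p Hp], q as [q Hq]; cbn; intros E; subst q.
  f_equal; apply proof_irrelevance.
Qed.

Lemma arr_is_left_dual (X Xs : ArrOb C) (ev : ArrHom (arr_tens Xs X) (arr_unit C))
    (coev : ArrHom (arr_unit C) (arr_tens X Xs)) :
  is_left_dual (M := Arr C) ev coev <->
  is_left_dual (fst (proj1_sig ev)) (fst (proj1_sig coev)) /\
  is_left_dual (snd (proj1_sig ev)) (snd (proj1_sig coev)).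
Proof.
  destruct X, Xs, ev as [[e1 e2] He], coev as [[c1 c2] Hc]; cbn.
  split.
  - intros [s1 s2].
    apply (f_equal (@proj1_sig _ _)) in s1, s2; cbn in s1, s2.
    injection s1 as s1a s1b; injection s2 as s2a s2b.
    split; split; assumption.
  - intros [[s1a s2a] [s1b s2b]].
    split; apply arr_hom_eq; cbn; f_equal; assumption.
Qed.

Lemma arr_has_left_dual_iff_iso (A B : ob C) (HA : has_left_dual A) (f : hom A B) :
  has_left_dual (M := Arr C) (MkArrOb f) <-> is_iso f.
Proof.
  split.
  - intros [[S T g] [ev [coev D]]].
    apply arr_is_left_dual in D as [D1 D2].
    destruct ev as [[e1 e2] He], coev as [[c1 c2] Hc]; cbn in *.
    rewrite id_l in He; rewrite id_r in Hc.
    exact (iso_of_compatible_left_duals D1 D2 He Hc).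
  - intros [fi [fif ffi]].
    destruct HA as [As [ev [coev D]]].
    assert (Hev : idm unit ∘ ev = (ev ∘ (idm As ⊗ fi)) ∘ (idm As ⊗ f)).
    { rewrite <- compA, tens_comp, fif, !id_l, tens_id, id_r; reflexivity. }
    assert (Hcoev : (f ⊗ idm As) ∘ coev = ((f ⊗ idm As) ∘ coev) ∘ idm unit).
    { symmetry; apply id_r. }
    exists (MkArrOb (idm As)), (exist _ (ev, ev ∘ (idm As ⊗ fi)) Hev),
      (exist _ (coev, (f ⊗ idm As) ∘ coev) Hcoev).
    apply (proj2 (arr_is_left_dual _ _)); cbn; split.
    + exact D.
    + exact (left_dual_transport fif ffi D).
Qed.

End ArrowCategory.

Lemma arr_right_dual_rev (C : MonCat) (A B : ob C) (f : hom A B) :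
  has_right_dual (M := Arr C) (MkArrOb f) <->
  has_left_dual (M := Arr (revC C)) (MkArrOb (M := rev C) f).
Proof.
  split.
  - intros [[S T g] [ev [coev D]]].
    apply arr_is_left_dual in D as [D1 D2].
    exists (MkArrOb (M := rev C) g), ev, coev.
    apply (arr_is_left_dual (C := revC C)); split; apply is_left_dual_rev; assumption.
  - intros [[S T g] [ev [coev D]]].
    apply (arr_is_left_dual (C := revC C)) in D as [D1 D2].
    exists (MkArrOb (M := C) g), ev, coev.
    apply arr_is_left_dual; split; apply is_left_dual_rev; assumption.
Qed.

Theorem mainTheorem11 (C : MonCat) (HC : rigid C) (A B : ob C) (f : hom A B) :
  (has_left_dual (M := Arr C) (MkArrOb f) <-> is_iso f) /\
  (has_right_dual (M := Arr C) (MkArrOb f) <-> is_iso f).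
Proof.
  destruct (HC A) as [HAl HAr]; split.
  - exact (arr_has_left_dual_iff_iso HAl f).
  - rewrite arr_right_dual_rev.
    apply (arr_has_left_dual_iff_iso (C := revC C)).
    apply has_right_dual_rev; exact HAr.
Qed.
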